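(* Let $\epsilon\in(0,1)$ and let $W=[w_1,\dots,w_n]$ be a mass vector ($w_i\ge0$, $\sum_i w_i=1$) such that for every $\theta\in\Theta$ and every $\lambda\in[\kappa(\theta),\tau(\theta)]$, $$(1-\epsilon)H(\theta,\lambda)\le \tilde H(\theta,\lambda)\le (1+\epsilon)H(\theta,\lambda).$$ Then with $\tilde{\mathbb P}_n=\sum_i w_i\delta_{\xi_i}$ we have, for every $\theta\in\Theta$, $$(1-\epsilon)R^{\mathbb P_n}_{\sigma,p}(\theta)\le R^{\tilde{\mathbb P}_n}_{\sigma,p}(\theta)\le (1+\epsilon)R^{\mathbb P_n}_{\sigma,p}(\theta).$$
   Context: Setting: $\Xi=\mathbb X\times\mathbb Y$ with $\mathbb X\subseteq\mathbb R^m$, $\mathbb Y\subseteq\mathbb R$, metric $\mathtt d((x,y),(x',y'))=\|x-x'\|+\frac{\gamma}{2}|y-y'|$ ($\|\cdot\|$ a norm on $\mathbb R^m$, $\gamma>0$), $(\Xi,\mathtt d)$ complete. Fix $p\ge1$, $\sigma>0$, data $\xi_1,\dots,\xi_n\in\Xi$ with empirical distribution $\mathbb P_n=\frac1n\sum_i\delta_{\xi_i}$. Loss $\ell:\mathbb R^d\times\Xi\to[0,\infty)$, feasible set $\Theta\subseteq\mathbb R^d$. Assumption: $\ell(\theta,\cdot)$ continuous for each $\theta\in\Theta$, and there are a positive continuous $\mathtt C(\theta)$ and $\xi_0\in\Xi$ with $\ell(\theta,\xi)\le\mathtt C(\theta)(1+\mathtt d^p(\xi,\xi_0))$. The $p$-Wasserstein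 distance is $W_p(\mathbb P,\mathbb P')=(\inf_{\pi\in\Pi(\mathbb P,\mathbb P')}\int\mathtt d^p(\xi,\xi')\,\pi(d\xi,d\xi'))^{1/p}$; $\mathbb B_{\sigma,p}(\mathbb Q)$ is the set of Borel probability measures on $\Xi$ at $W_p$-distance at most $\sigma$ from $\mathbb Q$; the worst-case risk is $R^{\mathbb Q}_{\sigma,p}(\theta)=\sup_{\mathbb Q'\in\mathbb B_{\sigma,p}(\mathbb Q)}\mathbb E^{\mathbb Q'}[\ell(\theta,\xi)]$. Define $h(\theta,\lambda,\xi)=\sup_{\zeta\in\Xi}\{\ell(\theta,\zeta)-\lambda\mathtt d^p(\zeta,\xi)\}$, $h_i(\theta,\lambda)=h(\theta,\lambda,\xi_i)$, $H(\theta,\lambda)=\frac1n\sum_ih_i(\theta,\lambda)$, $\tilde H(\theta,\lambda)=\sum_iw_ih_i(\theta,\lambda)$. Known strong duality (used as a standing fact): for any distribution $\mathbb Q$ with finite $p$-th moment, $R^{\mathbb Q}_{\sigma,p}(\theta)=\inf_{\lambda\ge0}\{\lambda\sigma^p+\mathbb E^{\mathbb Q}[h(\theta,\lambda,\xi)]\}$. Define $\kappa(\theta)=\limsup_{\mathtt d(\xi,\xi_0)\to\infty}\frac{\ell(\theta,\xi)-\ell(\theta,\xi_0)}{\mathtt d^p(\xi,\xi_0)}$; it is assumed that $h_i(\theta,\kappa(\theta))<\infty$ for all $i,\theta$ (and $h_i(\theta,\lambda)=\infty$ for $\lambda<\kappa(\theta)$). Let $\rho=\max_i\mathtt d(\xi_i,\xi_0)$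 and $\tau(\theta)=\mathtt C(\theta)(2^{p-1}+\frac{1+2^{p-1}\rho^p}{\sigma^p})$. *)

From HB Require Import structures.
From mathcomp Require Import all_boot all_order all_algebra.
From mathcomp Require Import all_classical all_reals all_analysis.
Set Implicit Arguments. Unset Strict Implicit. Unset Printing Implicit Defensive.
Import Order.TTheory GRing.Theory Num.Theory.
Import numFieldNormedType.Exports.
Local Open Scope classical_set_scope.
Local Open Scope ring_scope.

Definition pt (R : realType) (m : nat) := ('rV[R]_m * R)%type.

Definition Borel (R : realType) (m : nat) :=
  g_sigma_algebraType (@open ('rV[R]_m * R)%type).

Definition is_norm (R : realType) (m : nat) (nrm : 'rV[R]_m -> R) : Prop :=
  [/\ forall x, 0 <= nrm x,
      forall x, nrm x = 0 -> x = 0,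
      forall (a : R) x, nrm (a *: x) = `|a| * nrm x &
      forall x y, nrm (x + y) <= nrm x + nrm y].

Definition dist (R : realType) (m : nat) (nrm : 'rV[R]_m -> R) (gamma : R)
  (z z' : pt R m) : R :=
  nrm (z.1 - z'.1) + gamma / 2 * `|z.2 - z'.2|.

Definition complete_in (R : realType) (m : nat) (d : pt R m -> pt R m -> R)
  (Xi : set (pt R m)) : Prop :=
  forall u : nat -> pt R m, (forall k, Xi (u k)) ->
    (forall e, 0 < e -> exists N, forall i j, (N <= i)%N -> (N <= j)%N ->
        d (u i) (u j) < e) ->
    exists2 z, Xi z & forall e, 0 < e -> exists N, forall k, (N <= k)%N ->
        d (u k) z < e.

Definition coupling (R : realType) (m : nat) (P Q : set (Borel R m) -> \bar R)
  (pi : probability (Borel R m * Borel R m)%type R) : Prop :=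
  forall A : set (Borel R m), measurable A ->
    pi (A `*` setT) = P A /\ pi (setT `*` A) = Q A.

Definition Wpp (R : realType) (m : nat) (d : pt R m -> pt R m -> R) (p : R)
  (P Q : set (Borel R m) -> \bar R) : \bar R :=
  ereal_inf [set x | exists pi : probability (Borel R m * Borel R m)%type R,
     coupling P Q pi /\ x = (\int[pi]_z ((d z.1 z.2) `^ p)%:E)%E].

(* Borel probability measures on Xi (i.e. concentrated on Xi) within
   W_p-distance sigma of Q; W_p <= sigma iff W_p^p <= sigma^p *)
Definition wball (R : realType) (m : nat) (d : pt R m -> pt R m -> R)
  (Xi : set (pt R m)) (p sigma : R) (Q : set (Borel R m) -> \bar R)
  : set (probability (Borel R m) R) :=
  [set P | P (~` Xi) = 0%E /\ (Wpp d p P Q <= (sigma `^ p)%:E)%E].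

Definition risk (R : realType) (m k : nat) (d : pt R m -> pt R m -> R)
  (Xi : set (pt R m)) (p sigma : R) (ell : 'rV[R]_k -> pt R m -> R)
  (Q : set (Borel R m) -> \bar R) (theta : 'rV[R]_k) : \bar R :=
  ereal_sup [set (\int[P]_z (ell theta z)%:E)%E | P in wball d Xi p sigma Q].

Definition wemp (R : realType) (m n : nat) (w : 'I_n -> R) (xi : 'I_n -> pt R m)
  : set (Borel R m) -> \bar R :=
  fun A => (\sum_(i < n) (w i)%:E * \d_(xi i : Borel R m) A)%E.

Definition hfun (R : realType) (m k : nat) (d : pt R m -> pt R m -> R)
  (Xi : set (pt R m)) (p : R) (ell : 'rV[R]_k -> pt R m -> R)
  (theta : 'rV[R]_k) (lam : R) (x : pt R m) : \bar R :=
  ereal_sup [set (ell theta z - lam * (d z x) `^ p)%:E | z in Xi].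

(* sum_i w_i h_i(theta, lambda) (H with w_i = 1/n, tilde H with w) *)
Definition Hw (R : realType) (m k n : nat) (d : pt R m -> pt R m -> R)
  (Xi : set (pt R m)) (p : R) (ell : 'rV[R]_k -> pt R m -> R)
  (w : 'I_n -> R) (xi : 'I_n -> pt R m) (theta : 'rV[R]_k) (lam : R) : \bar R :=
  (\sum_(i < n) (w i)%:E * hfun d Xi p ell theta lam (xi i))%E.

(* kappa(theta) = limsup_{d(xi,xi0) -> oo, xi in Xi}
     (ell(theta,xi) - ell(theta,xi0)) / d^p(xi,xi0) *)
Definition kappa (R : realType) (m k : nat) (d : pt R m -> pt R m -> R)
  (Xi : set (pt R m)) (p : R) (ell : 'rV[R]_k -> pt R m -> R)
  (xi0 : pt R m) (theta : 'rV[R]_k) : \bar R :=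
  ereal_inf [set ereal_sup
      [set ((ell theta z - ell theta xi0) / (d z xi0) `^ p)%:E
         | z in [set z | Xi z /\ M < d z xi0]]
    | M in [set M : R | 0 < M]].

Definition tau (R : realType) (m k n : nat) (d : pt R m -> pt R m -> R)
  (p sigma : R) (C : 'rV[R]_k -> R) (xi : 'I_n -> pt R m) (xi0 : pt R m)
  (theta : 'rV[R]_k) : R :=
  let rho := \big[Num.max/0]_(i < n) d (xi i) xi0 in
  C theta * (2 `^ (p - 1) + (1 + 2 `^ (p - 1) * rho `^ p) / sigma `^ p).

(* Strong duality turns both risks into one-dimensional problems
   [inf_(lam >= 0) lam sigma^p + H(lam)], with [H] resp. [tH]. The growth bound
   on the loss gives [H(lam0) <= C (1 + 2^(p-1) rho^p)] at [lam0 = C 2^(p-1)], so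
   the dual objective at [lam0] is at most [tau sigma^p]; hence no [lam > tau]
   improves on [lam0] and only [lam] in [[0, tau]] need be compared. There the
   coreset hypothesis applies above [kappa], and below [kappa] both [H] and [tH]
   are [+oo]. *)

From HB Require Import structures.
From mathcomp Require Import all_boot all_order all_algebra.
From mathcomp Require Import all_classical all_reals all_analysis.
Import Order.TTheory GRing.Theory Num.Theory.
Import numFieldNormedType.Exports.
From mathcomp Require Import lra ring.
Local Open Scope classical_set_scope.
Local Open Scope ring_scope.

Definition dual_value {R : realType} (s : R) (H : R -> \bar R) : \bar R :=
  ereal_inf [set ((lam * s)%:E + H lam)%E | lam in [set lam : R | 0 <= lam]].

Section dual_value_comparison.
Context {R : realType} {s T lam0 : R} {Hu Hv : R -> \bar R}.
Hypotheses (s_gt0 : 0 < s) (lam0_ge0 : 0 <= lam0) (lam0_le : lam0 <= T).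
Hypothesis Hu_lam0 : ((lam0 * s)%:E + Hu lam0 <= (T * s)%:E)%E.
Local Open Scope ereal_scope.

Let dual_obj_lam0_le lam : (T < lam)%R -> (lam0 * s)%:E + Hu lam0 <= (lam * s)%:E.
Proof. by move=> Tlam; rewrite (le_trans Hu_lam0)// lee_fin ler_wpM2r ?ltW. Qed.

Lemma dual_value_lower (c : R) : (0 <= c <= 1)%R -> (forall lam, 0 <= Hv lam) ->
  (forall lam, (0 <= lam <= T)%R -> c%:E * Hu lam <= Hv lam) ->
  c%:E * dual_value s Hu <= dual_value s Hv.
Proof.
move=> /andP[c_ge0 c_le1] Hv_ge0 HuHv; apply: le_ereal_inf_tmp => _ [lam lam_ge0 <-].
have c_inf_le l : (0 <= l)%R -> c%:E * dual_value s Hu <= c%:E * ((l * s)%:E + Hu l).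
  by move=> l_ge0; apply: lee_wpmul2l; [rewrite lee_fin | apply: ereal_inf_lbound; exists l].
have lams_ge0 : (0 <= lam * s)%R by rewrite mulr_ge0 // ltW.
have [lamT|Tlam] := leP lam T.
  apply: le_trans (c_inf_le _ lam_ge0) _.
  rewrite muleDr// -EFinM leeD ?lee_fin ?ler_piMl//.
  by apply: HuHv; rewrite lam_ge0.
apply: le_trans (c_inf_le _ lam0_ge0) _.
apply: (@le_trans _ _ (c%:E * (lam * s)%:E)).
  by apply: lee_wpmul2l; [rewrite lee_fin | exact: dual_obj_lam0_le].
by rewrite -EFinM (le_trans _ (leeDl _ _))// lee_fin ler_piMl.
Qed.

Lemma dual_value_upper (c : R) : (1 <= c)%R -> (forall lam, 0 <= Hu lam) ->
  (forall lam, (0 <= lam <= T)%R -> Hv lam <= c%:E * Hu lam) ->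
  dual_value s Hv <= c%:E * dual_value s Hu.
Proof.
move=> c_ge1 Hu_ge0 HvHu; have c_gt0 : (0 < c)%R by rewrite (lt_le_trans ltr01).
rewrite -ereal_inf_pZl//; apply: le_ereal_inf_tmp => _ [_ [lam lam_ge0 <-] <-].
have inf_le l : (0 <= l <= T)%R -> dual_value s Hv <= c%:E * ((l * s)%:E + Hu l).
  case/andP=> l_ge0 lT; apply: le_trans (ereal_inf_lbound _) _; first by exists l.
  rewrite muleDr// -EFinM leeD//; last by apply: HvHu; rewrite l_ge0.
  by rewrite lee_fin ler_peMl// mulr_ge0// ltW.
have [lamT|Tlam] := leP lam T; first by apply: inf_le; rewrite lam_ge0.
have lam0_in : (0 <= lam0 <= T)%R by rewrite lam0_ge0.
apply: le_trans (inf_le _ lam0_in) _.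
rewrite lee_pmul2l ?lte_fin//.
by apply: le_trans (dual_obj_lam0_le _ Tlam) _; rewrite leeDl.
Qed.

End dual_value_comparison.

Lemma powR_add_le {R : realType} (p a b : R) : 1 <= p -> 0 <= a -> 0 <= b ->
  (a + b) `^ p <= 2 `^ (p - 1) * (a `^ p + b `^ p).
Proof.
move=> p_ge1 a_ge0 b_ge0.
have -> : a + b = 2 * (2^-1 * a + 2^-1 * b) by rewrite -mulrDr mulrA mulfV ?mul1r.
rewrite powRM ?addr_ge0 ?mulr_ge0 ?invr_ge0//.
have convex : (2^-1 * a + 2^-1 * b) `^ p <= 2^-1 * a `^ p + 2^-1 * b `^ p.
  rewrite {2 4}(_ : 2^-1 = 1 - 2^-1 :> R); last by rewrite {2}(splitr 1) div1r addrK.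
  by apply: (convex_powR p_ge1 (Itv01 _ _)) => //=;
    rewrite ?inE/= ?in_itv/= ?andbT ?invr_ge0// invf_le1 ?ler1n.
rewrite (le_trans (ler_wpM2l (powR_ge0 _ _) convex))// -mulrDr mulrA.
by rewrite powRB ?powRr1//; apply/implyP.
Qed.

Section hfun_bounds.
Context {R : realType} {m k : nat}.
Variables (d : pt R m -> pt R m -> R) (Xi : set (pt R m)) (p : R).
Variables (ell : 'rV[R]_k -> pt R m -> R) (theta : 'rV[R]_k).
Hypothesis p_ge1 : 1 <= p.
Hypothesis d_ge0 : forall x y, 0 <= d x y.
Hypothesis d_xx : forall x, d x x = 0.
Hypothesis d_triangle : forall x y z, d x z <= d x y + d y z.
Hypothesis ell_ge0 : forall z, Xi z -> 0 <= ell theta z.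

Let p_ge0 : 0 <= p. Proof. exact: le_trans ler01 p_ge1. Qed.

Lemma hfun_ge_loss lam x : Xi x -> ((ell theta x)%:E <= hfun d Xi p ell theta lam x)%E.
Proof.
move=> Xi_x; apply: ereal_sup_ubound; exists x => //.
by rewrite d_xx powR0 ?mulr0 ?subr0// gt_eqF// (lt_le_trans ltr01).
Qed.

Lemma hfun_ge0 lam x : Xi x -> (0 <= hfun d Xi p ell theta lam x)%E.
Proof. by move=> Xi_x; rewrite (le_trans _ (hfun_ge_loss lam _ Xi_x))// lee_fin ell_ge0. Qed.

(* The penalty at [lam = c 2^(p-1)] absorbs the growth of [ell] around [x0],
   because [d z x0 ^ p <= 2^(p-1) (d z x ^ p + d x x0 ^ p)]. *)
Lemma hfun_le_growth (c rho : R) x x0 : 0 <= c ->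
  (forall z, Xi z -> ell theta z <= c * (1 + d z x0 `^ p)) -> d x x0 <= rho ->
  (hfun d Xi p ell theta (c * 2 `^ (p - 1)) x <=
     (c * (1 + 2 `^ (p - 1) * rho `^ p))%:E)%E.
Proof.
move=> c_ge0 growth x_rho; apply: ge_ereal_sup => _ [z Xi_z <-]; rewrite lee_fin.
have pow_le a b : 0 <= a -> a <= b -> a `^ p <= b `^ p.
  by move=> a_ge0 ab; rewrite ge0_ler_powR ?nnegrE ?(le_trans a_ge0 ab)// p_ge0.
have z_x0 : d z x0 `^ p <= 2 `^ (p - 1) * (d z x `^ p + rho `^ p).
  apply: le_trans (pow_le _ _ (d_ge0 _ _) (d_triangle z x x0)) _.
  apply: le_trans (powR_add_le _ _ _ p_ge1 (d_ge0 _ _) (d_ge0 _ _)) _.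
  by rewrite ler_wpM2l ?powR_ge0// lerD2l pow_le.
have := growth z Xi_z; have := ler_wpM2l c_ge0 z_x0; rewrite !mulrDr !mulrA mulr1; lra.
Qed.

Variables (n : nat) (xi : 'I_n -> pt R m).
Hypothesis xi_Xi : forall i, Xi (xi i).

Lemma Hw_ge0 (v : 'I_n -> R) lam : (forall i, 0 <= v i) ->
  (0 <= Hw d Xi p ell v xi theta lam)%E.
Proof. by move=> v_ge0; apply: sume_ge0 => i _; rewrite mule_ge0 ?lee_fin ?hfun_ge0. Qed.

Lemma Hw_pinfty (v : 'I_n -> R) lam : (forall i, 0 <= v i) -> \sum_(i < n) v i = 1 ->
  (forall i, hfun d Xi p ell theta lam (xi i) = +oo%E) ->
  Hw d Xi p ell v xi theta lam = +oo%E.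
Proof.
move=> v_ge0 v_sum1 h_oo.
have [i v_gt0] : exists i, 0 < v i.
  apply/not_existsP => v_le0; move: v_sum1; rewrite big1 => [/eqP|i _].
    by rewrite eq_sym oner_eq0.
  by apply/eqP; rewrite eq_le v_ge0 andbT leNgt; apply/negP/v_le0.
rewrite /Hw (bigD1 i)//= h_oo gt0_muley ?lte_fin// addye//.
rewrite gt_eqF// (lt_le_trans ltNy0)// sume_ge0// => j _.
by rewrite mule_ge0 ?lee_fin ?hfun_ge0.
Qed.

Lemma Hw_le_growth (v : 'I_n -> R) (c rho : R) x0 :
  (forall i, 0 <= v i) -> \sum_(i < n) v i = 1 -> 0 <= c ->
  (forall z, Xi z -> ell theta z <= c * (1 + d z x0 `^ p)) ->
  (forall i, d (xi i) x0 <= rho) ->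
  (Hw d Xi p ell v xi theta (c * 2 `^ (p - 1)) <=
     (c * (1 + 2 `^ (p - 1) * rho `^ p))%:E)%E.
Proof.
move=> v_ge0 v_sum1 c_ge0 growth xi_rho.
apply: le_trans (_ : \sum_(i < n) (v i)%:E * (c * (1 + 2 `^ (p - 1) * rho `^ p))%:E <= _)%E.
  apply: lee_sum => i _; apply: lee_wpmul2l; first by rewrite lee_fin.
  exact: hfun_le_growth _ _ _ _ c_ge0 growth (xi_rho i).
under eq_bigr do rewrite -EFinM.
by rewrite sumEFin -mulr_suml v_sum1 mul1r.
Qed.

Lemma Hw_le_tau (v : 'I_n -> R) (sigma : R) (C : 'rV[R]_k -> R) x0 :
  (forall i, 0 <= v i) -> \sum_(i < n) v i = 1 -> 0 < sigma -> 0 <= C theta ->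
  (forall z, Xi z -> ell theta z <= C theta * (1 + d z x0 `^ p)) ->
  ((C theta * 2 `^ (p - 1) * sigma `^ p)%:E +
     Hw d Xi p ell v xi theta (C theta * 2 `^ (p - 1)) <=
   (tau d p sigma C xi x0 theta * sigma `^ p)%:E)%E.
Proof.
move=> v_ge0 v_sum1 sigma_gt0 C_ge0 growth.
set rho := \big[Num.max/0]_(i < n) d (xi i) x0.
have -> : tau d p sigma C xi x0 theta * sigma `^ p =
    C theta * 2 `^ (p - 1) * sigma `^ p + C theta * (1 + 2 `^ (p - 1) * rho `^ p).
  by rewrite /tau /=; field; rewrite gt_eqF ?powR_gt0.
rewrite EFinD leeD2l//; apply: (Hw_le_growth _ _ _ _ v_ge0 v_sum1 C_ge0 growth) => i.
exact: le_bigmax.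
Qed.

End hfun_bounds.

Lemma le_tau {R : realType} {m k n : nat} (d : pt R m -> pt R m -> R) (p sigma : R)
    (C : 'rV[R]_k -> R) (xi : 'I_n -> pt R m) x0 theta :
  0 < sigma -> 0 <= C theta -> C theta * 2 `^ (p - 1) <= tau d p sigma C xi x0 theta.
Proof.
move=> sigma_gt0 C_ge0; rewrite /tau /= ler_wpM2l// lerDl.
by rewrite divr_ge0 ?addr_ge0 ?mulr_ge0 ?powR_ge0.
Qed.

Section dist_metric.
Context {R : realType} {m : nat}.
Variables (nrm : 'rV[R]_m -> R) (gamma : R).
Hypotheses (nrm_norm : is_norm nrm) (gamma_gt0 : 0 < gamma).

Let half_gamma_ge0 : 0 <= gamma / 2. Proof. by rewrite divr_ge0// ltW. Qed.

Lemma dist_ge0 z z' : 0 <= dist nrm gamma z z'.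
Proof. by case: nrm_norm => nrm_ge0 _ _ _; rewrite /dist addr_ge0// mulr_ge0. Qed.

Lemma dist_xx z : dist nrm gamma z z = 0.
Proof.
case: nrm_norm => _ _ nrmZ _.
by rewrite /dist !subrr -(scale0r (0 : 'rV[R]_m)) nrmZ normr0 mul0r mulr0 addr0.
Qed.

Lemma dist_triangle z y x : dist nrm gamma z x <= dist nrm gamma z y + dist nrm gamma y x.
Proof.
case: nrm_norm => _ _ _ nrmD; rewrite /dist addrACA lerD//.
  by rewrite (le_trans _ (nrmD _ _))// addrA subrK.
by rewrite -mulrDr ler_wpM2l// ler_distD.
Qed.

End dist_metric.

Lemma sum_uniform_weights (R : realType) (n : nat) : (0 < n)%N ->
  \sum_(i < n) n%:R^-1 = 1 :> R.
Proof.
by move=> n_gt0; rewrite sumr_const card_ord -[_ *+ n]mulr_natl mulfV// pnatr_eq0 -lt0n.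
Qed.

Theorem theorem1 (R : realType) (m k n : nat)
  (nrm : 'rV[R]_m -> R) (gamma p sigma : R)
  (Xs : set 'rV[R]_m) (Ys : set R)
  (ell : 'rV[R]_k -> pt R m -> R) (Theta : set 'rV[R]_k)
  (C : 'rV[R]_k -> R) (xi0 : pt R m) (xi : 'I_n -> pt R m)
  (eps : R) (w : 'I_n -> R) :
  let Xi := Xs `*` Ys in
  let d := dist nrm gamma in
  let h := hfun d Xi p ell in
  let Pn := wemp (fun _ => n%:R^-1) xi in
  let tPn := wemp w xi in
  let H := Hw d Xi p ell (fun _ => n%:R^-1) xi in
  let tH := Hw d Xi p ell w xi in
  is_norm nrm -> 0 < gamma -> complete_in d Xi ->
  1 <= p -> 0 < sigma -> (0 < n)%N ->
  (forall i, Xi (xi i)) -> Xi xi0 ->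
  (forall theta z, Xi z -> 0 <= ell theta z) ->
  (forall theta, Theta theta -> forall z, Xi z -> forall e, 0 < e ->
     exists2 del, 0 < del & forall z', Xi z' -> d z' z < del ->
       `|ell theta z' - ell theta z| < e) ->
  (forall theta, Theta theta -> 0 < C theta) ->
  {within Theta, continuous C} ->
  (forall theta z, Theta theta -> Xi z ->
     ell theta z <= C theta * (1 + (d z xi0) `^ p)) ->
  (forall theta, Theta theta ->
     [/\ kappa d Xi p ell xi0 theta \is a fin_num,
         forall i, (h theta (fine (kappa d Xi p ell xi0 theta)) (xi i) < +oo)%E &
         forall lam, (lam%:E < kappa d Xi p ell xi0 theta)%E ->
           forall i, h theta lam (xi i) = +oo%E]) ->
  (* standing fact: strong duality (for discrete distributions on the data) *)
  (forall v : 'I_n -> R, (forall i, 0 <= v i) -> \sum_(i < n) v i = 1 ->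
     forall theta, Theta theta ->
       risk d Xi p sigma ell (wemp v xi) theta =
       ereal_inf [set ((lam * sigma `^ p)%:E + Hw d Xi p ell v xi theta lam)%E
                   | lam in [set lam : R | 0 <= lam]]) ->
  0 < eps < 1 ->
  (forall i, 0 <= w i) -> \sum_(i < n) w i = 1 ->
  (forall theta, Theta theta -> forall lam : R,
     (kappa d Xi p ell xi0 theta <= lam%:E)%E ->
     lam <= tau d p sigma C xi xi0 theta ->
     ((1 - eps)%:E * H theta lam <= tH theta lam)%E /\
     (tH theta lam <= (1 + eps)%:E * H theta lam)%E) ->
  forall theta, Theta theta ->
    ((1 - eps)%:E * risk d Xi p sigma ell Pn theta
       <= risk d Xi p sigma ell tPn theta)%E /\
    (risk d Xi p sigma ell tPn theta
       <= (1 + eps)%:E * risk d Xi p sigma ell Pn theta)%E.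
Proof.
move=> Xi d h Pn tPn H tH nrm_norm gamma_gt0 _ p_ge1 sigma_gt0 n_gt0 xi_Xi _ ell_ge0 _
  C_gt0 _ growth kappa_std duality /andP[eps_gt0 eps_lt1] w_ge0 w_sum1 coreset theta Th.
have unif_ge0 (i : 'I_n) : 0 <= n%:R^-1 :> R by rewrite invr_ge0.
have d_ge0 x y : 0 <= d x y by exact: dist_ge0.
have d_xx x : d x x = 0 by exact: dist_xx.
have d_tri x y z : d x z <= d x y + d y z by exact: dist_triangle.
have {}ell_ge0 := ell_ge0 theta.
have H_ge0 lam : (0 <= H theta lam)%E by apply: Hw_ge0.
have tH_ge0 lam : (0 <= tH theta lam)%E by apply: Hw_ge0.
have C_ge0 : 0 <= C theta by rewrite ltW ?C_gt0.
have s_gt0 : 0 < sigma `^ p by exact: powR_gt0.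
set lam0 := C theta * 2 `^ (p - 1); set T := tau d p sigma C xi xi0 theta.
have lam0_ge0 : 0 <= lam0 by rewrite mulr_ge0 ?powR_ge0.
have lam0_le : lam0 <= T by exact: le_tau.
have H_lam0 : ((lam0 * sigma `^ p)%:E + H theta lam0 <= (T * sigma `^ p)%:E)%E.
  by apply: Hw_le_tau => //; [exact: sum_uniform_weights | move=> z; exact: growth].
have coreset_le lam : 0 <= lam <= T -> ((1 - eps)%:E * H theta lam <= tH theta lam)%E /\
    (tH theta lam <= (1 + eps)%:E * H theta lam)%E.
  case/andP=> _ lamT; have [lamK|Klam] := ltP lam%:E (kappa d Xi p ell xi0 theta).
    have [_ _ /(_ lam lamK) h_oo] := kappa_std theta Th.
    rewrite /H /tH !Hw_pinfty ?sum_uniform_weights//.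
    by rewrite leey gt0_muley ?lte_fin ?addr_gt0.
  exact: coreset.
rewrite /Pn /tPn !duality ?sum_uniform_weights//.
split.
- apply: (dual_value_lower s_gt0 lam0_ge0 H_lam0) => [|//|lam /coreset_le[]//].
  by rewrite subr_ge0 gerBl !ltW.
- apply: (dual_value_upper s_gt0 lam0_ge0 lam0_le H_lam0) => [|//|lam /coreset_le[]//].
  by rewrite lerDl ltW.
Qed.
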